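(* Assume the setting described in the context, with $\beta$ separable over $k$, and assume that it is not the case that [$D=k$, $\rho=\mathrm{id}_k$, $\epsilon=1$, $\dim_kV=2$ and $h$ is isotropic]. Let $x\in\mathcal B(H)$ and $\Lambda\in\mathrm{Latt}^1_h(V)$ satisfy $\mathrm{End}(\Lambda)(t)\cap\mathfrak h=\mathrm{LF}(x)(t)$ for all $t\in\mathbb R$. Then $1_i\in\mathrm{End}(\Lambda)(0)$ for every $i\in J$.
   Context: Let $k$ be a non-Archimedean local field with discrete valuation $\nu$ and residue characteristic different from $2$; for every finite-dimensional division algebra $\Delta$ over a finite extension of $k$, $\nu$ also denotes the extension of $\nu$ to $\Delta$, with valuation ring $o_\Delta$, maximal ideal $\mathfrak p_\Delta$, uniformizer $\pi_\Delta$. Let $D$ be a finite-dimensional central division $k$-algebra with continuous involution $\rho$, $k_0$ the elements of $k$ fixed by $\rho$, $V$ a finite-dimensional right $D$-space, $A=\mathrm{End}_D(V)$, $h$ a non-degenerate $\epsilon$-hermitian form on $V$ ($\epsilon=\pm1$; $h(vd_1,wd_2)=\rho(d_1)h(v,w)d_2$, $h(v,w)=\epsilon\rho(h(w,v))$) with adjoint involution $\sigma$, $\mathfrak g=\{a\in A:a+\sigma(a)=0\}$. An $o_\Delta$-lattice function on a finite-dimensional right $\Delta$-space $W$ is a map $\Lambda$ from $\mathbb R$ to full $o_\Delta$-lattices of $W$, with $\Lambda(r+\nu(\pi_\Delta))=\Lambda(r)\pi_\Delta$, decreasing, left continuous; $\mathrm{Latt}^1_{o_\Delta}(W)$ their set;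 $\mathrm{End}(\Lambda)(r)=\{a:a\Lambda(s)\subseteq\Lambda(s+r)\ \forall s\}$. For a signed hermitian form $h'$ on $W$: $M^\#=\{x:h'(x,M)\subseteq\mathfrak p_\Delta\}$, $\Lambda^\#(r)=(\bigcup_{s>-r}\Lambda(s))^\#$, $\mathrm{Latt}^1_{h'}(W)=\{\Lambda:\Lambda^\#=\Lambda\}$. Let $\beta\in\mathfrak g$ with $E=k[\beta]=\prod_{i\in J}E_i$ (fields), idempotents $1_i$, $V_i=1_iV$, $\mathrm{End}_D(V_i)=1_iA1_i$; $J_{un}=\{i:\sigma(1_i)=1_i\}$; $J_+$ contains one index from each pair $i\ne i'$ with $\sigma(1_i)=1_{i'}$. Fix central division $E_i$-algebras $\Delta_i$, right $\Delta_i$-spaces $W_i$, $E_i$-algebra isomorphisms $\varphi_i:\mathrm{End}_{\Delta_i}(W_i)\to\mathrm{End}_{E_i\otimes_kD}(V_i)$, and for $i\in J_{un}$ a signed hermitian form $h_i$ on $W_i$ (for an involution of $\Delta_i$) with adjoint involution $\varphi_i^{-1}\sigma\varphi_i$. $\mathcal B(H)=\prod_{i\in J_{un}}\mathrm{Latt}^1_{h_i}(W_i)\times\prod_{i\in J_+}\mathrm{Latt}^1_{o_{\Delta_i}}(W_i)$. $\mathfrak h=\{a\in\mathfrak g:a\beta=\beta a\}$, and for $x=(\Theta_i)$: $\mathrm{LF}(x)(t)=\sum_{i\in J_{un}}(\varphi_i(\mathrm{End}(\Theta_i)(t))\cap\mathfrak g)+\sum_{i\in J_+}\{a-\sigma(a):a\in\varphi_i(\mathrm{End}(\Theta_i)(t))\}$.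 *)

From HB Require Import structures.
From mathcomp Require Import all_boot all_order all_algebra all_field.
From mathcomp Require Import reals.
Set Implicit Arguments.
Unset Strict Implicit.
Unset Printing Implicit Defensive.
Import Order.TTheory GRing.Theory Num.Theory.
Local Open Scope ring_scope.

(* Valuations (real valued, only evaluated on nonzero elements).       *)

Definition is_valuation {R : realType} {T : nzRingType} (v : T -> R) : Prop :=
  (forall a b : T, a != 0 -> b != 0 -> a * b != 0 -> v (a * b) = v a + v b) /\
  (forall a b : T, a != 0 -> b != 0 -> a + b != 0 ->
     Num.min (v a) (v b) <= v (a + b)).

Definition in_o {R : realType} {T : nzRingType} (v : T -> R) (d : T) : Prop :=
  d = 0 \/ 0 <= v d.
Definition in_p {R : realType} {T : nzRingType} (v : T -> R) (d : T) : Prop :=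
  d = 0 \/ 0 < v d.

Definition is_uniformizer {R : realType} {T : nzRingType} (v : T -> R) (pi : T)
  : Prop :=
  pi != 0 /\ 0 < v pi /\ (forall d, d != 0 -> 0 < v d -> v pi <= v d).

Definition v_close {R : realType} {T : nzRingType} (v : T -> R) (a b : T) (M : R)
  : Prop := a = b \/ M <= v (a - b).

Definition discrete_normalized {R : realType} {k : fieldType} (nu : k -> R) :=
  (forall c : k, c != 0 -> exists z : int, nu c = z%:~R) /\
  (exists c : k, c != 0 /\ nu c = 1).

Definition v_complete {R : realType} {k : fieldType} (nu : k -> R) :=
  forall u : nat -> k,
    (forall M : R, exists N : nat, forall m n : nat,
        (N <= m)%N -> (N <= n)%N -> v_close nu (u m) (u n) M) ->
    exists l : k, forall M : R, exists N : nat, forall n : nat,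
        (N <= n)%N -> v_close nu (u n) l M.

Definition finite_residue_field {R : realType} {k : fieldType} (nu : k -> R) :=
  exists s : seq k, (forall b, b \in s -> in_o nu b) /\
    (forall a, in_o nu a -> exists2 b, b \in s & in_p nu (a - b)).

Definition nonarch_local_field {R : realType} {k : fieldType} (nu : k -> R) :=
  is_valuation nu /\ discrete_normalized nu /\ v_complete nu /\
  finite_residue_field nu.

Definition residue_char_not_2 {R : realType} {k : fieldType} (nu : k -> R) :=
  (2%:R : k) != 0 /\ nu 2%:R = 0.

Definition is_division {k : fieldType} (D : falgType k) :=
  forall d : D, d != 0 -> d \is a GRing.unit.

Definition central_division {k : fieldType} (D : falgType k) :=
  is_division D /\
  (forall z : D, (forall d : D, z * d = d * z) -> exists c : k, z = c%:A).

Definition valuation_extending {R : realType} {k : fieldType} (nu : k -> R)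
  (D : falgType k) (vD : D -> R) :=
  is_valuation vD /\ (forall c : k, c != 0 -> vD (c%:A) = nu c).

(* involution = additive anti-automorphism of order 2 (not nec. k-linear) *)
Definition is_involution {T : nzRingType} (rho : T -> T) :=
  (forall a b, rho (a + b) = rho a + rho b) /\
  (forall a b, rho (a * b) = rho b * rho a) /\
  rho 1 = 1 /\ (forall a, rho (rho a) = a).

Definition continuous_involution {R : realType} {T : nzRingType}
  (vD : T -> R) (rho : T -> T) :=
  is_involution rho /\
  (forall M : R, exists N : R, forall d : T, d != 0 -> N <= vD d ->
      rho d = 0 \/ M <= vD (rho d)).

Definition right_module {k : fieldType} {D : falgType k} {W : vectType k}
  (act : W -> D -> W) :=
  (forall v w d, act (v + w) d = act v d + act w d) /\
  (forall v d d', act v (d + d') = act v d + act v d') /\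
  (forall v d d', act v (d * d') = act (act v d) d') /\
  (forall v, act v 1 = v) /\
  (forall v (c : k), act v (c%:A) = c *: v).

Definition nondeg_eps_hermitian {k : fieldType} {D : falgType k} {W : vectType k}
  (act : W -> D -> W) (rho : D -> D) (eps : D) (h : W -> W -> D) :=
  (eps = 1 \/ eps = -1) /\
  (forall v v' w, h (v + v') w = h v w + h v' w) /\
  (forall v w w', h v (w + w') = h v w + h v w') /\
  (forall v w d1 d2, h (act v d1) (act w d2) = rho d1 * h v w * d2) /\
  (forall v w, h v w = eps * rho (h w v)) /\
  (forall v, (forall w, h v w = 0) -> v = 0).

(* f is D-linear (i.e. f in End_D(W)); elements of 'End(W) are k-linear *)
Definition D_linear {k : fieldType} {D : falgType k} {W : vectType k}
  (act : W -> D -> W) (f : 'End(W)) :=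
  forall w d, f (act w d) = act (f w) d.

Definition lpow {k : fieldType} {V : vectType k} (f : 'End(V)) (n : nat) : 'End(V) :=
  iter n (fun g => (f \o g)%VF) \1%VF.

Definition in_kpoly {k : fieldType} {V : vectType k} (beta a : 'End(V)) :=
  exists p : {poly k}, a = \sum_(i < size p) p`_i *: lpow beta i.

Definition separable_elt {k : fieldType} {V : vectType k} (beta : 'End(V)) :=
  exists p : {poly k}, p != 0 /\ separable_poly p /\
    \sum_(i < size p) p`_i *: lpow beta i = 0.

(* k[beta] = prod_{i in J} E_i with E_i = 1_i k[beta] fields; e i = 1_i *)
Definition field_decomposition {k : fieldType} {V : vectType k} {J : finType}
  (beta : 'End(V)) (e : J -> 'End(V)) :=
  (forall i, in_kpoly beta (e i)) /\
  (forall i, e i != 0) /\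
  (forall i, (e i \o e i)%VF = e i) /\
  (forall i j, i != j -> (e i \o e j)%VF = 0) /\
  (\sum_i e i = \1%VF) /\
  (forall i a, in_kpoly beta a -> (e i \o a)%VF != 0 ->
     exists2 b, in_kpoly beta b & (e i \o a \o b)%VF = e i).

Definition in_Ei {k : fieldType} {V : vectType k} (beta ei a : 'End(V)) :=
  exists2 b, in_kpoly beta b & a = (ei \o b)%VF.

Definition adjoint_inv {k : fieldType} {D : falgType k} {V : vectType k}
  (actV : V -> D -> V) (h : V -> V -> D) (sigma : 'End(V) -> 'End(V)) :=
  (forall a, D_linear actV a -> D_linear actV (sigma a)) /\
  (forall a, D_linear actV a -> forall v w, h (a v) w = h v (sigma a w)).

Definition in_g {k : fieldType} {D : falgType k} {V : vectType k}
  (actV : V -> D -> V) (sigma : 'End(V) -> 'End(V)) (a : 'End(V)) :=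
  D_linear actV a /\ a + sigma a = 0.

Definition in_frak_h {k : fieldType} {D : falgType k} {V : vectType k}
  (actV : V -> D -> V) (sigma : 'End(V) -> 'End(V)) (beta a : 'End(V)) :=
  in_g actV sigma a /\ (a \o beta)%VF = (beta \o a)%VF.

Definition in_Jun {k : fieldType} {V : vectType k} {J : finType}
  (sigma : 'End(V) -> 'End(V)) (e : J -> 'End(V)) (i : J) :=
  sigma (e i) = e i.

Definition Jplus_choice {k : fieldType} {V : vectType k} {J : finType}
  (sigma : 'End(V) -> 'End(V)) (e : J -> 'End(V)) (Jp : {set J}) :=
  (forall i, i \in Jp -> sigma (e i) != e i) /\
  (forall i i', i != i' -> sigma (e i) = e i' -> (i \in Jp) != (i' \in Jp)).

(* Delta is a central division E_i-algebra via io : E_i -> Delta *)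
Definition central_division_over {k : fieldType} {V : vectType k}
  (beta ei : 'End(V)) (Dl : falgType k) (io : 'End(V) -> Dl) :=
  is_division Dl /\
  (forall a b, in_Ei beta ei a -> in_Ei beta ei b -> io (a + b) = io a + io b) /\
  (forall a b, in_Ei beta ei a -> in_Ei beta ei b ->
     io (a \o b)%VF = io a * io b) /\
  (forall (c : k) a, in_Ei beta ei a -> io (c *: a) = c *: io a) /\
  io ei = 1 /\
  (forall a, in_Ei beta ei a -> io a = 0 -> a = 0) /\
  (forall z : Dl, (forall d, z * d = d * z) <-> exists2 a, in_Ei beta ei a & z = io a).

(* ph : End_{Delta}(W) -> End_{E_i (x) D}(V_i) is an E_i-algebra isomorphism,
   where End_{E_i (x) D}(V_i) = {b in A | b = 1_i b 1_i, b beta = beta b} *)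
Definition Ei_algebra_iso {k : fieldType} {D : falgType k} {V : vectType k}
  (actV : V -> D -> V) (beta ei : 'End(V))
  {Dl : falgType k} (io : 'End(V) -> Dl) {W : vectType k} (actW : W -> Dl -> W)
  (ph : 'End(W) -> 'End(V)) :=
  let target b := D_linear actV b /\ b = (ei \o b \o ei)%VF /\
                  (b \o beta)%VF = (beta \o b)%VF in
  (forall f, D_linear actW f -> target (ph f)) /\
  (forall b, target b -> exists2 f, D_linear actW f & ph f = b) /\
  (forall f g, D_linear actW f -> D_linear actW g -> ph f = ph g -> f = g) /\
  (forall f g, D_linear actW f -> D_linear actW g -> ph (f + g) = ph f + ph g) /\
  (forall f g, D_linear actW f -> D_linear actW g ->
     ph (f \o g)%VF = (ph f \o ph g)%VF) /\
  ph \1%VF = ei /\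
  (forall a f, in_Ei beta ei a -> D_linear actW f ->
     (forall w, f w = actW w (io a)) -> ph f = a).

(* adjoint involution of hW equals ph^-1 sigma ph *)
Definition adjoint_is_transported {k : fieldType} {V : vectType k}
  (sigma : 'End(V) -> 'End(V))
  {Dl : falgType k} {W : vectType k} (actW : W -> Dl -> W) (hW : W -> W -> Dl)
  (ph : 'End(W) -> 'End(V)) :=
  forall f g, D_linear actW f -> D_linear actW g -> ph g = sigma (ph f) ->
    forall w w', hW (f w) w' = hW w (g w').

Definition is_basis {k : fieldType} {Dl : falgType k} {W : vectType k}
  (act : W -> Dl -> W) (n : nat) (b : 'I_n -> W) :=
  (forall w, exists c : 'I_n -> Dl, w = \sum_(j < n) act (b j) (c j)) /\
  (forall c : 'I_n -> Dl, \sum_(j < n) act (b j) (c j) = 0 -> forall j, c j = 0).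

Definition full_lattice {R : realType} {k : fieldType} {Dl : falgType k}
  {W : vectType k} (vD : Dl -> R) (act : W -> Dl -> W) (M : W -> Prop) :=
  exists (n : nat) (b : 'I_n -> W), is_basis act b /\
    forall w, M w <-> exists c : 'I_n -> Dl,
        (forall j, in_o vD (c j)) /\ w = \sum_(j < n) act (b j) (c j).

Definition lattice_function {R : realType} {k : fieldType} {Dl : falgType k}
  {W : vectType k} (vD : Dl -> R) (act : W -> Dl -> W) (L : R -> W -> Prop) :=
  (forall r, full_lattice vD act (L r)) /\
  (forall pi, is_uniformizer vD pi ->
     forall r w, L (r + vD pi) w <-> exists2 u, L r u & w = act u pi) /\
  (forall r s, r <= s -> forall w, L s w -> L r w) /\
  (forall r w, (forall s, s < r -> L s w) -> L r w).

Definition dual_lattice {R : realType} {k : fieldType} {Dl : falgType k}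
  {W : vectType k} (vD : Dl -> R) (h : W -> W -> Dl) (M : W -> Prop) : W -> Prop :=
  fun x => forall y, M y -> in_p vD (h x y).

Definition dual_lf {R : realType} {k : fieldType} {Dl : falgType k}
  {W : vectType k} (vD : Dl -> R) (h : W -> W -> Dl) (L : R -> W -> Prop)
  : R -> W -> Prop :=
  fun r => dual_lattice vD h (fun y => exists2 s, - r < s & L s y).

Definition self_dual_lf {R : realType} {k : fieldType} {Dl : falgType k}
  {W : vectType k} (vD : Dl -> R) (act : W -> Dl -> W) (h : W -> W -> Dl)
  (L : R -> W -> Prop) :=
  lattice_function vD act L /\ (forall r w, dual_lf vD h L r w <-> L r w).

Definition End_lf {R : realType} {k : fieldType} {Dl : falgType k}
  {W : vectType k} (act : W -> Dl -> W) (L : R -> W -> Prop) (t : R)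
  (f : 'End(W)) :=
  D_linear act f /\ (forall s w, L s w -> L (s + t) (f w)).

(* x in B(H) (components outside J_un and J_+ are irrelevant) *)
Definition in_BH {R : realType} {k : fieldType} {V : vectType k} {J : finType}
  (sigma : 'End(V) -> 'End(V)) (e : J -> 'End(V)) (Jp : {set J})
  (Dl : J -> falgType k) (vDl : forall i, Dl i -> R)
  (W : J -> vectType k) (actW : forall i, W i -> Dl i -> W i)
  (hW : forall i, W i -> W i -> Dl i) (x : forall i, R -> W i -> Prop) :=
  forall i,
    (in_Jun sigma e i -> self_dual_lf (vDl i) (actW i) (hW i) (x i)) /\
    (i \in Jp -> lattice_function (vDl i) (actW i) (x i)).

Definition LF {R : realType} {k : fieldType} {D : falgType k} {V : vectType k}
  {J : finType} (actV : V -> D -> V)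
  (sigma : 'End(V) -> 'End(V)) (e : J -> 'End(V)) (Jp : {set J})
  (Dl : J -> falgType k) (W : J -> vectType k)
  (actW : forall i, W i -> Dl i -> W i)
  (phi : forall i, 'End(W i) -> 'End(V))
  (x : forall i, R -> W i -> Prop) (t : R) (a : 'End(V)) :=
  exists y : J -> 'End(V), a = \sum_i y i /\ forall i,
    (in_Jun sigma e i ->
       (exists2 f, End_lf (actW i) (x i) t f & y i = phi i f) /\
       in_g actV sigma (y i)) /\
    (i \in Jp ->
       exists2 f, End_lf (actW i) (x i) t f & y i = phi i f - sigma (phi i f)) /\
    (~ in_Jun sigma e i -> i \notin Jp -> y i = 0).

Definition excluded_case {k : fieldType} {D : falgType k} {V : vectType k}
  (rho : D -> D) (eps : D) (h : V -> V -> D) :=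
  (\dim (fullv : {vspace D}) = 1)%N /\ (forall d, rho d = d) /\ eps = 1 /\
  (\dim (fullv : {vspace V}) = 2)%N /\ (exists v : V, v != 0 /\ h v v = 0).

From HB Require Import structures.
From mathcomp Require Import all_boot all_order all_algebra all_field.
From mathcomp Require Import reals.
From mathcomp Require Import lra.
From Stdlib Require Import Classical Wf_nat.
Import Order.TTheory GRing.Theory Num.Theory.
Set Implicit Arguments.
Unset Strict Implicit.
Unset Printing Implicit Defensive.
Local Open Scope ring_scope.

(* Each idempotent [1_i] is built, at level [0], from elements of [LF(x)]:
   - if [i] is unitary and [z = 1_i beta <> 0], then [z] and its inverse [w] in
     the field [E_i] are skew; right multiplication by the central elements [z]
     and [w] of [Delta_i] shifts [x_i] by their valuations, so [z] and [w] lie in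
     [End(Lambda)] at levels summing to [nu(z w) = nu(1) = 0];
   - for [p] in [J_+], [u = 1_p - sigma(1_p)] lies in [LF(x)(0)], and
     [1_p, sigma(1_p) = (u^2 +- u)/2], with [2] a unit since the residue
     characteristic is not [2];
   - at most one [1_i] kills [beta], and it is [1] minus the others. *)

Section Valuation.

Variables (R : realType) (T : nzRingType) (v : T -> R).
Hypothesis Hv : is_valuation v.

Lemma valuation1 : v 1 = 0.
Proof.
have := proj1 Hv 1 1 (oner_neq0 _) (oner_neq0 _).
rewrite mulr1 => /(_ (oner_neq0 _)); lra.
Qed.

Lemma valuationN1 : v (-1) = 0.
Proof.
have n1 : (-1 : T) != 0 by rewrite oppr_eq0 oner_neq0.
have := proj1 Hv (-1) (-1) n1 n1; rewrite mulrNN mulr1 valuation1.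
move=> /(_ (oner_neq0 _)); lra.
Qed.

Lemma valuationN (a : T) : a != 0 -> v (- a) = v a.
Proof.
move=> na; have n1 : (-1 : T) != 0 by rewrite oppr_eq0 oner_neq0.
have := proj1 Hv (-1) a n1 na; rewrite mulN1r oppr_eq0 => /(_ na) ->.
by rewrite valuationN1 add0r.
Qed.

Lemma in_oM (a b : T) : in_o v a -> in_o v b -> in_o v (a * b).
Proof.
case=> [->|Ha]; first by left; rewrite mul0r.
case=> [->|Hb]; first by left; rewrite mulr0.
have [->|nab] := eqVneq (a * b) 0; first by left.
have na : a != 0 by apply: contraNneq nab => ->; rewrite mul0r.
have nb : b != 0 by apply: contraNneq nab => ->; rewrite mulr0.
by right; rewrite (proj1 Hv) // addr_ge0.
Qed.

Lemma valuation_sum_gt (I : finType) (P : pred I) (F : I -> T) (m : R) :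
  (forall i, P i -> F i = 0 \/ m < v (F i)) ->
  \sum_(i | P i) F i = 0 \/ m < v (\sum_(i | P i) F i).
Proof.
move=> HF; apply: (big_ind (fun a => a = 0 \/ m < v a)) => //; first by left.
move=> a b [->|Ha]; first by rewrite add0r.
case=> [->|Hb]; first by rewrite addr0; right.
have [->|na] := eqVneq a 0; first by rewrite add0r; right.
have [->|nb] := eqVneq b 0; first by rewrite addr0; right.
have [->|nab] := eqVneq (a + b) 0; first by left.
by right; apply: lt_le_trans (proj2 Hv a b na nb nab); rewrite lt_min Ha Hb.
Qed.

Lemma in_oD (a b : T) : in_o v a -> in_o v b -> in_o v (a + b).
Proof.
case=> [->|Ha]; first by rewrite add0r.
case=> [->|Hb]; first by rewrite addr0; right.
have [->|na] := eqVneq a 0; first by rewrite add0r; right.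
have [->|nb] := eqVneq b 0; first by rewrite addr0; right.
have [->|nab] := eqVneq (a + b) 0; first by left.
by right; apply: le_trans (proj2 Hv a b na nb nab); rewrite le_min Ha Hb.
Qed.

Lemma in_oN1 : in_o v (-1).
Proof. by right; rewrite valuationN1. Qed.

Lemma sum_eq0_valuation_tie (I : finType) (F : I -> T) :
  \sum_i F i = 0 -> (exists i, F i != 0) ->
  exists i j, [/\ i != j, F i != 0, F j != 0 & v (F i) = v (F j)].
Proof.
move=> Hs [i0 Hi0]; apply: NNPP => Hno.
have [j0 Hj0 Hmin] := @arg_minP _ _ _ i0 (fun i => F i != 0) (fun i => v (F i)) Hi0.
have small j : j != j0 -> F j = 0 \/ v (F j0) < v (F j).
  move=> nj; have [|Fj] := eqVneq (F j) 0; first by left.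
  right; rewrite lt_neqAle Hmin // andbT; apply/eqP => E.
  by apply: Hno; exists j0, j; split; rewrite // eq_sym.
move: Hs; rewrite (bigD1 j0) //=.
have [->|Hr] := @valuation_sum_gt _ (fun j => j != j0) F _ small.
  by rewrite addr0 => /eqP; rewrite (negbTE Hj0).
move/eqP; rewrite addr_eq0 => /eqP E.
have nr : \sum_(i | i != j0) F i != 0 by apply: contraNneq Hj0 => H; rewrite E H oppr0.
by move: Hr; rewrite E valuationN //; lra.
Qed.

End Valuation.

Section RightModule.

Variables (k : fieldType) (Dl : falgType k) (W : vectType k) (act : W -> Dl -> W).
Hypothesis Hact : right_module act.

Lemma act0r (w : W) : act w 0 = 0.
Proof.
have := (proj1 (proj2 Hact)) w 0 0; rewrite addr0.
by move/(congr1 (fun u => u - act w 0)); rewrite subrr addrK.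
Qed.

Lemma act0l (d : Dl) : act 0 d = 0.
Proof.
have := (proj1 Hact) 0 0 d; rewrite addr0.
by move/(congr1 (fun u => u - act 0 d)); rewrite subrr addrK.
Qed.

Lemma act_suml n (F : 'I_n -> W) (d : Dl) :
  act (\sum_(j < n) F j) d = \sum_(j < n) act (F j) d.
Proof.
by elim/big_rec2: _ => [|j u1 u2 _ <-]; [exact: act0l | rewrite (proj1 Hact)].
Qed.

Lemma actZl (c : k) (w : W) (d : Dl) : act (c *: w) d = c *: act w d.
Proof.
have [_ [_ [actM [_ actZ]]]] := Hact.
by rewrite -!actZ -!actM comm_alg.
Qed.

Lemma D_linear_comp (f g : 'End(W)) :
  D_linear act f -> D_linear act g -> D_linear act (f \o g)%VF.
Proof. by move=> Hf Hg w d; rewrite !comp_lfunE Hg Hf. Qed.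

Lemma D_linear_id : D_linear act \1%VF.
Proof. by move=> w d; rewrite !id_lfunE. Qed.

Lemma D_linear0 : D_linear act 0.
Proof. by move=> w d; rewrite !lfunE /= act0l. Qed.

Lemma D_linearD (f g : 'End(W)) :
  D_linear act f -> D_linear act g -> D_linear act (f + g).
Proof. by move=> Hf Hg w d; rewrite !lfunE /= Hf Hg (proj1 Hact). Qed.

Lemma D_linearZ (c : k) (f : 'End(W)) : D_linear act f -> D_linear act (c *: f).
Proof. by move=> Hf w d; rewrite !lfunE /= Hf actZl. Qed.

Lemma D_linear_sum (I : finType) (F : I -> 'End(W)) :
  (forall i, D_linear act (F i)) -> D_linear act (\sum_i F i).
Proof.
by move=> HF; elim/big_rec: _ => [|i f _]; [exact: D_linear0 | exact: D_linearD].
Qed.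

Variables (R : realType) (vD : Dl -> R).
Hypothesis HvD : is_valuation vD.

Section FullLattice.

Variable M : W -> Prop.
Hypothesis HM : full_lattice vD act M.

Lemma full_lattice0 : M 0.
Proof.
have [n [b [_ Mb]]] := HM; apply/Mb; exists (fun _ => 0); split=> [j|]; first by left.
by rewrite big1 // => j _; rewrite act0r.
Qed.

Lemma full_latticeD (w w' : W) : M w -> M w' -> M (w + w').
Proof.
have [n [b [_ Mb]]] := HM; move=> /Mb [c [Hc ->]] /Mb [c' [Hc' ->]].
apply/Mb; exists (fun j => c j + c' j); split=> [j|]; first exact: in_oD.
by rewrite -big_split; apply: eq_bigr => j _; rewrite (proj1 (proj2 Hact)).
Qed.

Lemma full_lattice_act (w : W) (d : Dl) : in_o vD d -> M w -> M (act w d).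
Proof.
have [n [b [_ Mb]]] := HM; move=> Hd /Mb [c [Hc ->]].
apply/Mb; exists (fun j => c j * d); split=> [j|]; first exact: in_oM.
by rewrite act_suml; apply: eq_bigr => j _; rewrite (proj1 (proj2 (proj2 Hact))).
Qed.

End FullLattice.

Variable L : R -> W -> Prop.

Lemma End_lf_comp (t t' : R) (f g : 'End(W)) :
  End_lf act L t f -> End_lf act L t' g -> End_lf act L (t + t') (f \o g)%VF.
Proof.
move=> [Hf Lf] [Hg Lg]; split; first exact: D_linear_comp.
move=> s w Lw; rewrite comp_lfunE [t + t']addrC addrA; exact: Lf (Lg _ _ Lw).
Qed.

Lemma End_lf_id : End_lf act L 0 \1%VF.
Proof. by split; [exact: D_linear_id | move=> s w; rewrite addr0 id_lfunE]. Qed.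

Hypothesis HL : lattice_function vD act L.

Lemma End_lf0 (t : R) : End_lf act L t 0.
Proof.
split=> [|s w _]; first exact: D_linear0.
by rewrite lfunE; apply: full_lattice0; apply: (proj1 HL).
Qed.

Lemma End_lfD (t : R) (f g : 'End(W)) :
  End_lf act L t f -> End_lf act L t g -> End_lf act L t (f + g).
Proof.
move=> [Hf Lf] [Hg Lg]; split=> [|s w Lw]; first exact: D_linearD.
by rewrite lfunE /=; apply: full_latticeD; [exact: (proj1 HL) | exact: Lf | exact: Lg].
Qed.

Lemma End_lfZ (t : R) (c : k) (f : 'End(W)) :
  in_o vD c%:A -> End_lf act L t f -> End_lf act L t (c *: f).
Proof.
move=> Hc [Hf Lf]; split=> [|s w Lw]; first exact: D_linearZ.
rewrite lfunE /= -(proj2 (proj2 (proj2 (proj2 Hact)))).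
by apply: full_lattice_act; [exact: (proj1 HL) | | exact: Lf].
Qed.

Lemma End_lfB (t : R) (f g : 'End(W)) :
  End_lf act L t f -> End_lf act L t g -> End_lf act L t (f - g).
Proof.
move=> Hf Hg; apply: End_lfD => //; rewrite -scaleN1r.
by apply: End_lfZ => //; rewrite scaleN1r; exact: in_oN1.
Qed.

Lemma End_lf_sum (t : R) (I : finType) (P : pred I) (F : I -> 'End(W)) :
  (forall i, P i -> End_lf act L t (F i)) -> End_lf act L t (\sum_(i | P i) F i).
Proof.
move=> HF; elim/big_rec: _ => [|i f Pi Hf]; first exact: End_lf0.
by apply: End_lfD => //; exact: HF.
Qed.

End RightModule.

Section Adjoint.

Variables (k : fieldType) (D : falgType k) (V : vectType k) (actV : V -> D -> V).
Variables (rho : D -> D) (eps : D) (h : V -> V -> D) (sigma : 'End(V) -> 'End(V)).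
Hypotheses (Hact : right_module actV) (Hrho : is_involution rho).
Hypotheses (Hh : nondeg_eps_hermitian actV rho eps h) (Hsigma : adjoint_inv actV h sigma).

Lemma form0r (v : V) : h v 0 = 0.
Proof.
have := (proj1 (proj2 (proj2 Hh))) v 0 0; rewrite addr0.
by move/(congr1 (fun d => d - h v 0)); rewrite subrr addrK.
Qed.

Lemma form0l (w : V) : h 0 w = 0.
Proof.
have := (proj1 (proj2 Hh)) 0 0 w; rewrite addr0.
by move/(congr1 (fun d => d - h 0 w)); rewrite subrr addrK.
Qed.

Lemma lfun_form_inj (c c' : 'End(V)) :
  (forall v w, h v (c w) = h v (c' w)) -> c = c'.
Proof.
have [_ [_ [hD [_ [hsym hnd]]]]] := Hh.
have rho0 : rho 0 = 0.
  have := (proj1 Hrho) 0 0; rewrite addr0.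
  by move/(congr1 (fun d => d - rho 0)); rewrite subrr addrK.
move=> Hc; apply/lfunP => w; apply/eqP; rewrite -subr_eq0; apply/eqP.
apply: hnd => v; rewrite hsym.
suff -> : h v (c w - c' w) = 0 by rewrite rho0 mulr0.
by apply: (addIr (h v (c' w))); rewrite -hD subrK add0r Hc.
Qed.

Lemma adjoint_transpose (a : 'End(V)) v w :
  D_linear actV a -> h (sigma a v) w = h v (a w).
Proof.
have hsym := proj1 (proj2 (proj2 (proj2 (proj2 Hh)))).
by move=> Da; rewrite [LHS]hsym -(proj2 Hsigma) // [RHS]hsym.
Qed.

Lemma adjoint0 : sigma 0 = 0.
Proof.
apply: lfun_form_inj => v w.
by rewrite -(proj2 Hsigma) ?lfunE /= ?form0l ?form0r //; exact: D_linear0.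
Qed.

Lemma adjoint1 : sigma \1%VF = \1%VF.
Proof.
by apply: lfun_form_inj => v w; rewrite -(proj2 Hsigma) ?id_lfunE //; exact: D_linear_id.
Qed.

Lemma adjointD (a b : 'End(V)) :
  D_linear actV a -> D_linear actV b -> sigma (a + b) = sigma a + sigma b.
Proof.
move=> Da Db; apply: lfun_form_inj => v w.
rewrite -(proj2 Hsigma); last exact: D_linearD.
have [_ [hDl [hDr _]]] := Hh.
by rewrite !lfunE /= hDl hDr !(proj2 Hsigma).
Qed.

Lemma adjoint_comp (a b : 'End(V)) :
  D_linear actV a -> D_linear actV b -> sigma (a \o b)%VF = (sigma b \o sigma a)%VF.
Proof.
move=> Da Db; apply: lfun_form_inj => v w.
rewrite -(proj2 Hsigma); last exact: D_linear_comp.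
by rewrite !comp_lfunE !(proj2 Hsigma).
Qed.

Lemma adjointK (a : 'End(V)) : D_linear actV a -> sigma (sigma a) = a.
Proof.
move=> Da; apply: lfun_form_inj => v w.
by rewrite -(proj2 Hsigma) ?adjoint_transpose //; exact: (proj1 Hsigma).
Qed.

Lemma adjoint_sum (I : finType) (F : I -> 'End(V)) :
  (forall i, D_linear actV (F i)) -> sigma (\sum_i F i) = \sum_i sigma (F i).
Proof.
move=> DF; suff [] : D_linear actV (\sum_i F i) /\ sigma (\sum_i F i) = \sum_i sigma (F i) by [].
apply: (big_ind2 (fun a b => D_linear actV a /\ sigma a = b)) => //.
- by split; [exact: D_linear0 | exact: adjoint0].
- move=> a1 a2 b1 b2 [Da1 <-] [Da2 <-].
  by split; [exact: D_linearD | exact: adjointD].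
Qed.

(* The involution [rho] maps the centre [k] of [D] to itself, so [sigma] is
   semilinear over [k]. *)
Lemma adjointZ (c : k) :
  central_division D ->
  exists c' : k, forall a, D_linear actV a -> sigma (c *: a) = c' *: sigma a.
Proof.
move=> [_ HC]; have [_ [rhoM [rho1 rhoK]]] := Hrho.
have [c' Hc'] : exists c' : k, rho c%:A = c'%:A.
  by apply: HC => d; rewrite -{1}(rhoK d) -rhoM -comm_alg rhoM rhoK.
exists c' => a Da; apply: lfun_form_inj => v w.
have [_ [_ [_ [hM _]]]] := Hh; have [_ [_ [_ [act1 actZ]]]] := Hact.
rewrite -(proj2 Hsigma); last exact: D_linearZ.
rewrite !lfunE /= -!actZ.
rewrite -[in LHS](act1 w) hM mulr1 -[in RHS](act1 v) hM rho1 mul1r.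
by rewrite (proj2 Hsigma) // Hc' comm_alg.
Qed.

End Adjoint.

Section PolynomialsInBeta.

Variables (k : fieldType) (V : vectType k) (beta : 'End(V)).

Definition peval (p : {poly k}) : 'End(V) := \sum_(i < size p) p`_i *: lpow beta i.

Lemma comp_lfun_sumr (I : finType) (b : 'End(V)) (F : I -> 'End(V)) :
  (b \o \sum_i F i)%VF = \sum_i (b \o F i)%VF.
Proof.
by elim/big_rec2: _ => [|i f1 f2 _ <-]; rewrite ?comp_lfun0r ?comp_lfunDr.
Qed.

Lemma comp_lfun_suml (I : finType) (b : 'End(V)) (F : I -> 'End(V)) :
  ((\sum_i F i) \o b)%VF = \sum_i (F i \o b)%VF.
Proof.
by elim/big_rec2: _ => [|i f1 f2 _ <-]; rewrite ?comp_lfun0l ?comp_lfunDl.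
Qed.

Lemma lpowD m n : (lpow beta m \o lpow beta n)%VF = lpow beta (m + n).
Proof. by elim: m => [|m IH]; rewrite ?comp_lfun1l // -comp_lfunA IH. Qed.

Lemma peval_comm (b : 'End(V)) (p : {poly k}) :
  (b \o beta)%VF = (beta \o b)%VF -> (b \o peval p)%VF = (peval p \o b)%VF.
Proof.
move=> Hb; have lpow_comm m : (b \o lpow beta m)%VF = (lpow beta m \o b)%VF.
  elim: m => [|m IH] /=; first by rewrite comp_lfun1l comp_lfun1r.
  by rewrite comp_lfunA Hb -comp_lfunA IH comp_lfunA.
rewrite /peval comp_lfun_sumr comp_lfun_suml; apply: eq_bigr => i _.
by rewrite -comp_lfunZr -comp_lfunZl lpow_comm.
Qed.

Lemma peval_widen (p : {poly k}) n :
  (size p <= n)%N -> peval p = \sum_(i < n) p`_i *: lpow beta i.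
Proof.
move=> le; rewrite /peval (big_ord_widen n (fun i => p`_i *: lpow beta i) le).
rewrite [RHS](bigID (fun i : 'I_n => (i < size p)%N)) /= [X in _ = _ + X]big1 ?addr0 //.
by move=> i; rewrite -leqNgt => Hi; rewrite nth_default // scale0r.
Qed.

Lemma in_kpoly_comm_beta (a : 'End(V)) : in_kpoly beta a -> (a \o beta)%VF = (beta \o a)%VF.
Proof. by case=> p ->; apply/esym/peval_comm. Qed.

Lemma in_kpoly_comm (a b : 'End(V)) :
  in_kpoly beta a -> in_kpoly beta b -> (a \o b)%VF = (b \o a)%VF.
Proof. by move=> Ka [p ->]; apply: peval_comm; exact: in_kpoly_comm_beta. Qed.

Lemma in_kpoly0 : in_kpoly beta 0.
Proof. by exists 0; rewrite size_poly0 big_ord0. Qed.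

Lemma in_kpolyD (a b : 'End(V)) : in_kpoly beta a -> in_kpoly beta b -> in_kpoly beta (a + b).
Proof.
move=> [p ->] [q ->]; exists (p + q); change (peval p + peval q = peval (p + q)).
have le_pq := (leq_maxl (size p) (size q), leq_maxr (size p) (size q)).
rewrite !(@peval_widen _ (maxn (size p) (size q))) ?le_pq //; last first.
  exact: leq_trans (size_polyD _ _) _.
by rewrite -big_split; apply: eq_bigr => i _; rewrite coefD scalerDl.
Qed.

Lemma in_kpolyZ (c : k) (a : 'End(V)) : in_kpoly beta a -> in_kpoly beta (c *: a).
Proof.
move=> [p ->]; exists (c *: p); change (c *: peval p = peval (c *: p)).
rewrite (@peval_widen (c *: p) (size p)) ?size_scale_leq // scaler_sumr.
by apply: eq_bigr => i _; rewrite coefZ scalerA.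
Qed.

Lemma in_kpoly_sum (I : finType) (F : I -> 'End(V)) :
  (forall i, in_kpoly beta (F i)) -> in_kpoly beta (\sum_i F i).
Proof.
by move=> HF; elim/big_rec: _ => [|i f _]; [exact: in_kpoly0 | exact: in_kpolyD].
Qed.

Lemma in_kpoly_lpow m : in_kpoly beta (lpow beta m).
Proof.
exists 'X^m; rewrite size_polyXn big_ord_recr /= coefXn eqxx scale1r big1 ?add0r //.
by move=> i _; rewrite coefXn ltn_eqF // scale0r.
Qed.

Lemma in_kpoly_beta : in_kpoly beta beta.
Proof. by have := in_kpoly_lpow 1; rewrite /= comp_lfun1r. Qed.

Lemma in_kpoly_comp (a b : 'End(V)) :
  in_kpoly beta a -> in_kpoly beta b -> in_kpoly beta (a \o b)%VF.
Proof.
move=> [p ->] [q ->]; rewrite /peval comp_lfun_sumr; apply: in_kpoly_sum => j.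
rewrite -comp_lfunZr comp_lfun_suml; apply: in_kpolyZ; apply: in_kpoly_sum => i.
by rewrite -comp_lfunZl lpowD; apply/in_kpolyZ/in_kpoly_lpow.
Qed.

Lemma comp_peval_annihilated (b : 'End(V)) (p : {poly k}) :
  (b \o beta)%VF = 0 -> (b \o peval p)%VF = p`_0 *: b.
Proof.
move=> Hb; rewrite /peval comp_lfun_sumr.
have [/eqP|pos] := posnP (size p).
  by rewrite size_poly_eq0 => /eqP ->; rewrite size_poly0 big_ord0 coef0 scale0r.
rewrite -(prednK pos) big_ord_recl /= -comp_lfunZr comp_lfun1r big1 ?addr0 //.
by move=> i _; rewrite -comp_lfunZr /= comp_lfunA Hb comp_lfun0l scaler0.
Qed.

Variables (D : falgType k) (actV : V -> D -> V).
Hypotheses (Hact : right_module actV) (Dbeta : D_linear actV beta).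

Lemma in_kpoly_D_linear (a : 'End(V)) : in_kpoly beta a -> D_linear actV a.
Proof.
have Dpow m : D_linear actV (lpow beta m).
  by elim: m => [|m IH]; [exact: D_linear_id | exact: D_linear_comp].
by case=> p ->; apply: D_linear_sum => // i; apply: D_linearZ.
Qed.

Variables (rho : D -> D) (eps : D) (h : V -> V -> D) (sigma : 'End(V) -> 'End(V)).
Hypotheses (Hrho : is_involution rho) (Hh : nondeg_eps_hermitian actV rho eps h).
Hypotheses (Hsigma : adjoint_inv actV h sigma) (HD : central_division D).
Hypothesis Sbeta : sigma beta = - beta.

Lemma adjoint_in_kpoly (a : 'End(V)) : in_kpoly beta a -> in_kpoly beta (sigma a).
Proof.
have Dpow m : D_linear actV (lpow beta m) by exact/in_kpoly_D_linear/in_kpoly_lpow.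
case=> p ->; rewrite (adjoint_sum Hact Hrho Hh Hsigma) //; last by move=> i; apply: D_linearZ.
apply: in_kpoly_sum => i; have [c' ->] // := adjointZ Hact Hrho Hh Hsigma p`_i HD.
apply: in_kpolyZ => //; elim: (nat_of_ord i) => [|m IH] /=.
  by rewrite (adjoint1 Hrho Hh Hsigma); exact: (in_kpoly_lpow 0).
rewrite (adjoint_comp Hrho Hh Hsigma) // Sbeta; apply: in_kpoly_comp => //.
by rewrite -scaleN1r; apply/in_kpolyZ/in_kpoly_beta.
Qed.

End PolynomialsInBeta.

Section FieldDecomposition.

Variables (k : fieldType) (V : vectType k) (beta : 'End(V)) (J : finType).
Variable e : J -> 'End(V).
Hypothesis He : field_decomposition beta e.

(* [E_i] is a field, so its only idempotents are [0] and [1_i]. *)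
Lemma field_decomposition_idem i (f : 'End(V)) :
  in_kpoly beta f -> (f \o f)%VF = f -> (e i \o f)%VF = 0 \/ (e i \o f)%VF = e i.
Proof.
have [Ke [_ [Eid [_ [_ Einv]]]]] := He.
move=> Kf ff; have [|nz] := eqVneq (e i \o f)%VF 0; [by left | right].
have [b Kb Hb] := Einv i f Kf nz.
have fe : (f \o e i)%VF = (e i \o f)%VF by exact: in_kpoly_comm Kf (Ke i).
have gg : ((e i \o f) \o (e i \o f))%VF = (e i \o f)%VF.
  by rewrite comp_lfunA -(comp_lfunA (e i) f) fe comp_lfunA Eid -comp_lfunA ff.
rewrite -{2}Hb -{2}gg -comp_lfunA Hb.
by rewrite -comp_lfunA fe comp_lfunA Eid.
Qed.

Lemma annihilated_idempotent_unique i j :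
  (e i \o beta)%VF = 0 -> (e j \o beta)%VF = 0 -> i = j.
Proof.
have [Ke [Ene [Eid [Eorth _]]]] := He.
move=> Hi Hj; apply/eqP; apply: contraT => ij; have [q Eq] := Ke j.
have ei_ej : (e i \o e j)%VF = q`_0 *: e i by rewrite [in LHS]Eq; exact: comp_peval_annihilated.
have ej_ej : (e j \o e j)%VF = q`_0 *: e j by rewrite {2}Eq; exact: comp_peval_annihilated.
have [q0|nq0] := eqVneq q`_0 0; first by move: (Ene j); rewrite -Eid ej_ej q0 scale0r eqxx.
by move: ei_ej; rewrite Eorth // => /esym/eqP; rewrite scaler_eq0 (negbTE nq0) (negbTE (Ene i)).
Qed.

End FieldDecomposition.

Lemma mulr_fact_int (R : realType) (v : R) (m n : nat) (z : int) :
  (0 < m <= n)%N -> v * m%:R = z%:~R -> exists z' : int, v * (n`!)%:R = z'%:~R.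
Proof.
move=> /dvdn_fact /dvdnP [q ->] Hm.
by exists (q%:Z * z); rewrite natrM mulrCA Hm intrM pmulrn mulrC.
Qed.

Section DivisionValuation.

Variables (R : realType) (k : fieldType) (Dl : falgType k) (vD : Dl -> R).
Hypotheses (Hdiv : is_division Dl) (HvD : is_valuation vD).

Lemma division_mulf_neq0 (x y : Dl) : x != 0 -> y != 0 -> x * y != 0.
Proof.
by move=> nx; apply: contraNneq => xy0; rewrite -(mulKr (Hdiv nx) y) xy0 mulr0.
Qed.

Lemma division_unit_neq0 (x : Dl) : x \is a GRing.unit -> x != 0.
Proof. by apply: contraTneq => ->; rewrite unitr0. Qed.

Lemma valuationV (x : Dl) : x != 0 -> vD x^-1 = - vD x.
Proof.
move=> nx; have nVx : x^-1 != 0 by rewrite invr_eq0.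
have := proj1 HvD x x^-1 nx nVx; rewrite mulrV ?Hdiv // valuation1 //.
by move=> /(_ (oner_neq0 _)); lra.
Qed.

Lemma valuationX (x : Dl) n : x != 0 -> vD (x ^+ n) = n%:R * vD x.
Proof.
move=> nx; elim: n => [|n IH]; first by rewrite expr0 mul0r valuation1.
have nxn : x ^+ n != 0 by exact/division_unit_neq0/unitrX/Hdiv.
rewrite exprS (proj1 HvD) ?division_mulf_neq0 // IH mulrSr; lra.
Qed.

Lemma valuationXz (x : Dl) (q : int) : x != 0 -> vD (x ^ q) = q%:~R * vD x.
Proof.
move=> nx; case: q => n; first exact: valuationX.
have nxn : x ^+ n.+1 != 0 by exact/division_unit_neq0/unitrX/Hdiv.
by rewrite NegzE /= valuationV // valuationX // mulNr.
Qed.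

(* With [q = floor (vD d / vD pi)], [pi^-q d] has valuation in [[0, vD pi)], hence
   [0] by minimality of [vD pi]. *)
Lemma valuation_uniformizer_multiple (pi d : Dl) :
  is_uniformizer vD pi -> d != 0 -> exists q : int, vD d = q%:~R * vD pi.
Proof.
move=> [npi [vpi_gt0 Hmin]] nd; pose q := Num.floor (vD d / vD pi).
have lo : q%:~R <= vD d / vD pi by exact: Num.Theory.floor_le.
have hi : vD d / vD pi < q%:~R + 1.
  by rewrite -[1]/(1%:~R) -intrD; exact: Num.Theory.floorD1_gt.
exists q; pose u := (pi ^ q)^-1 * d.
have npq : pi ^ q != 0 by exact/division_unit_neq0/unitrXz/Hdiv.
have nz_u : u != 0 by rewrite division_mulf_neq0 // invr_eq0.
have vu : vD u = vD d - q%:~R * vD pi.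
  by rewrite (proj1 HvD) ?invr_eq0 // valuationV // valuationXz //; lra.
move: lo hi; rewrite ler_pdivlMr // ltr_pdivrMr // => lo hi.
have [vu_gt0|] := ltrP 0 (vD u); last by lra.
by have := Hmin _ nz_u vu_gt0; lra.
Qed.

End DivisionValuation.

Section ExtendedValuation.

Variables (R : realType) (k : fieldType) (nu : k -> R) (Dl : falgType k) (vD : Dl -> R).
Hypotheses (Hdiv : is_division Dl) (Hext : valuation_extending nu vD).

Lemma valuationZ (a : k) (d : Dl) : a != 0 -> d != 0 -> vD (a *: d) = nu a + vD d.
Proof.
move=> na nd; have nA : a%:A != 0 :> Dl by rewrite scaler_eq0 negb_or na oner_neq0.
by rewrite -mulr_algl (proj1 (proj1 Hext)) ?division_mulf_neq0 // (proj2 Hext).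
Qed.

Hypothesis Hdisc : discrete_normalized nu.

(* Among the [n + 1] powers [1, d, ..., d^n], [n = dim Dl], some nontrivial
   [k]-relation holds; two of its terms have equal valuation, which forces
   [(i - j) vD d] into [nu k^x = Z]. *)
Lemma valuation_denominator (d : Dl) :
  d != 0 -> exists z : int, vD d * ((\dim {:Dl})`!)%:R = z%:~R.
Proof.
move=> nd; set n := \dim {:Dl}; pose X := [tuple d ^+ i | i < n.+1].
have Xi (i : 'I_n.+1) : X`_i = d ^+ i by rewrite -tnth_nth tnth_mktuple.
have nX : ~~ free X.
  rewrite /free size_tuple; apply/negP => /eqP dimX.
  by have := dimvS (subvf <<X>>%VS); rewrite dimX ltnn.
have [c Hc] :
    exists c : 'I_n.+1 -> k, ~ (\sum_(i < n.+1) c i *: X`_i = 0 -> forall i, c i = 0).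
  by apply: not_all_ex_not => H; move/negP: nX; apply; apply/freeP.
have [{}Hc /not_all_ex_not [i0 ci0]] := imply_to_and _ _ Hc.
pose F (i : 'I_n.+1) := c i *: d ^+ i.
have dX m : d ^+ m != 0 by exact/division_unit_neq0/unitrX/Hdiv.
have HF : \sum_i F i = 0 by rewrite -[RHS]Hc; apply: eq_bigr => i _; rewrite Xi.
have F0 : exists i, F i != 0 by exists i0; rewrite scaler_eq0 negb_or dX andbT; apply/eqP.
have [i [j [ij Fi Fj]]] := sum_eq0_valuation_tie (proj1 Hext) HF F0; move: Fi Fj.
have c_neq0 l : F l != 0 -> c l != 0 by apply: contraNneq => cl; rewrite /F cl scale0r.
move=> /c_neq0 ci /c_neq0 cj; rewrite /F !valuationZ // !(valuationX Hdiv (proj1 Hext)) //.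
have [[zi ->] [zj ->]] := (proj1 Hdisc _ ci, proj1 Hdisc _ cj).
have le_n (l : 'I_n.+1) : (l <= n)%N by rewrite -ltnS.
wlog lt_ji : i j zi zj ij {ci cj} / (j < i)%N.
  move=> wlog_ij; case: (ltngtP i j) => [lij|lji|eij] E.
  - by apply: (wlog_ij j i zj zi); rewrite 1?eq_sym // E.
  - exact: (wlog_ij i j zi zj).
  - by move: ij; rewrite (val_inj eij) eqxx.
move=> E; apply: (@mulr_fact_int _ _ (i - j) _ (zj - zi)).
  by rewrite subn_gt0 lt_ji (leq_trans (leq_subr _ _) (le_n i)).
by rewrite natrB ?(ltnW lt_ji) // intrD intrN; lra.
Qed.

(* The numbers [vD d * (dim Dl)!] are integers, so a least positive one exists. *)
Lemma uniformizer_exists : exists pi, is_uniformizer vD pi.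
Proof.
pose N : R := ((\dim {:Dl})`!)%:R.
have N_gt0 : 0 < N by rewrite ltr0n fact_gt0.
pose P m := (0 < m)%N /\ exists2 d : Dl, d != 0 & vD d * N = m%:R.
have P_ex : exists m, P m.
  have [c nc c1] : exists2 c : k, c != 0 & nu c = 1 by case: (proj2 Hdisc) => c [nc c1]; exists c.
  exists (\dim {:Dl})`!; split; first exact: fact_gt0.
  exists c%:A; first by rewrite scaler_eq0 negb_or nc oner_neq0.
  by rewrite (proj2 Hext) // c1 mul1r.
have [m0 [[[m0_gt0 [pi npi Hpi]] Hmin] _]] :=
  dec_inh_nat_subset_has_unique_least_element P (fun m => classic (P m)) P_ex.
have vpi_gt0 : 0 < vD pi by rewrite -(pmulr_lgt0 _ N_gt0) Hpi ltr0n.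
exists pi; split; [by [] | split => // d nd vd_gt0].
have [[m|m] Hd] := valuation_denominator nd; last first.
  by have := mulr_gt0 vd_gt0 N_gt0; rewrite Hd ltr0z.
have /ssrnat.leP : (m0 <= m)%coq_nat.
  apply: Hmin; split; last by exists d.
  by rewrite -(ltr0n R) -[m%:R]/(m%:Z%:~R) -Hd mulr_gt0.
by rewrite -(ler_nat R) -Hpi -[m%:R]/(m%:Z%:~R) -Hd ler_pM2r.
Qed.

End ExtendedValuation.

Section LatticeFunctionShift.

Variables (R : realType) (k : fieldType) (Dl : falgType k) (W : vectType k).
Variables (act : W -> Dl -> W) (vD : Dl -> R) (L : R -> W -> Prop) (pi : Dl).
Hypotheses (Hact : right_module act) (HL : lattice_function vD act L).
Hypotheses (Hpi : is_uniformizer vD pi) (Hdiv : is_division Dl).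

Lemma lattice_function_actX n s w : L s w -> L (s + n%:R * vD pi) (act w (pi ^+ n)).
Proof.
have [_ [_ [actM [act1 _]]]] := Hact; have shift := proj1 (proj2 HL) pi Hpi.
elim: n s w => [|n IH] s w Lw; first by rewrite mul0r addr0 expr0 act1.
have /IH : L (s + vD pi) (act w pi) by apply/shift; exists w.
by rewrite exprS actM; congr L; rewrite mulrSr; lra.
Qed.

Lemma lattice_function_actVX n s w :
  L s w -> L (s - n%:R * vD pi) (act w (pi ^+ n)^-1).
Proof.
have [_ [_ [actM [act1 _]]]] := Hact; have shift := proj1 (proj2 HL) pi Hpi.
have upi : pi \is a GRing.unit by apply: Hdiv; case: Hpi.
elim: n s w => [|n IH] s w Lw; first by rewrite mul0r subr0 expr0 invr1 act1.
have /IH : L (s - vD pi) (act w pi^-1).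
  have Lw' : L (s - vD pi + vD pi) w by rewrite subrK.
  have [u Lu ->] := (shift _ _).1 Lw'.
  by rewrite -actM mulrV // act1.
by rewrite exprSr invrM ?unitrX // actM; congr L; rewrite mulrSr; lra.
Qed.

Lemma lattice_function_actXz (q : int) s w :
  L s w -> L (s + q%:~R * vD pi) (act w (pi ^ q)).
Proof.
case: q => n Lw; first exact: lattice_function_actX.
by rewrite NegzE mulNr; exact: lattice_function_actVX.
Qed.

Hypothesis HvD : is_valuation vD.

(* Write [d = pi^q u] with [u] a unit of [o_Delta]. *)
Lemma lattice_function_act (d : Dl) s w : d != 0 -> L s w -> L (s + vD d) (act w d).
Proof.
move=> nd Lw; have [q vdq] := valuation_uniformizer_multiple Hdiv HvD Hpi nd.
have npq : pi ^ q != 0 by apply/division_unit_neq0/unitrXz/Hdiv; case: Hpi.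
have vu : in_o vD ((pi ^ q)^-1 * d).
  right; rewrite (proj1 HvD) ?invr_eq0 ?division_mulf_neq0 ?invr_eq0 //.
  by rewrite (valuationV Hdiv HvD) // (valuationXz Hdiv HvD) ?vdq ?addNr //; case: Hpi.
rewrite vdq -[in act w d](mulVKr (Hdiv npq) d) (proj1 (proj2 (proj2 Hact))).
by apply: full_lattice_act (proj1 HL _) _ _ vu _ => //; exact: lattice_function_actXz.
Qed.

End LatticeFunctionShift.

Lemma lfun_of_linear (k : fieldType) (W : vectType k) (f : W -> W) :
  (forall v w, f (v + w) = f v + f w) -> (forall (c : k) v, f (c *: v) = c *: f v) ->
  exists F : 'End(W), forall w, F w = f w.
Proof.
move=> fD fZ; have lf : linear f by move=> c u v; rewrite fD fZ.
pose F : {linear W -> W} := HB.pack f (GRing.isLinear.Build k W W *:%R f lf).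
by exists (linfun F) => w; rewrite lfunE.
Qed.

Lemma central_act_End_lf (R : realType) (k : fieldType) (nu : k -> R)
    (Dl : falgType k) (vD : Dl -> R) (W : vectType k) (act : W -> Dl -> W)
    (L : R -> W -> Prop) (d : Dl) :
  discrete_normalized nu -> valuation_extending nu vD -> is_division Dl ->
  right_module act -> lattice_function vD act L ->
  d != 0 -> (forall d', d * d' = d' * d) ->
  exists2 f : 'End(W), (forall w, f w = act w d) & End_lf act L (vD d) f.
Proof.
move=> Hdisc Hext Hdiv Hact HL nd dC; have [actD [_ [actM _]]] := Hact.
have [f fE] := lfun_of_linear (fun v w => actD v w d) (fun c v => actZl Hact c v d).
exists f => //; split=> [w d'|s w Lw]; first by rewrite !fE -!actM dC.
have [pi Hpi] := uniformizer_exists Hdiv Hext Hdisc.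
by rewrite fE; exact: lattice_function_act Hact HL Hpi Hdiv (proj1 Hext) d s w nd Lw.
Qed.

Section AdjointIdempotents.

Variables (k : fieldType) (D : falgType k) (V : vectType k) (actV : V -> D -> V).
Variables (rho : D -> D) (eps : D) (h : V -> V -> D) (sigma : 'End(V) -> 'End(V)).
Variables (beta : 'End(V)) (J : finType) (e : J -> 'End(V)).
Hypotheses (Hact : right_module actV) (Hrho : is_involution rho).
Hypotheses (Hh : nondeg_eps_hermitian actV rho eps h) (Hsigma : adjoint_inv actV h sigma).
Hypotheses (HD : central_division D) (Dbeta : D_linear actV beta).
Hypotheses (Sbeta : sigma beta = - beta) (He : field_decomposition beta e).

Let De i : D_linear actV (e i) := in_kpoly_D_linear Hact Dbeta (proj1 He i).
Let Ke_adj i : in_kpoly beta (sigma (e i)) :=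
  adjoint_in_kpoly Hact Dbeta Hrho Hh Hsigma HD Sbeta (proj1 He i).

Let Dadj i : D_linear actV (sigma (e i)) := proj1 Hsigma _ (De i).
Let adj_comp := adjoint_comp Hrho Hh Hsigma.
Let adjK := adjointK Hrho Hh Hsigma.

Lemma adjoint_idempotent i : (sigma (e i) \o sigma (e i))%VF = sigma (e i).
Proof. by rewrite -adj_comp ?(proj1 (proj2 (proj2 He))). Qed.

Lemma adjoint_idempotent_orth i :
  sigma (e i) != e i -> (e i \o sigma (e i))%VF = 0.
Proof.
move=> Hi; case: (field_decomposition_idem He i (Ke_adj i) (adjoint_idempotent i)) => // H.
move: Hi; have := congr1 sigma H.
by rewrite adj_comp // adjK // H => <-; rewrite eqxx.
Qed.

Lemma adjoint_idempotent_partner i :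
  sigma (e i) != e i -> exists2 j, i != j & sigma (e i) = e j.
Proof.
have [_ [Ene [_ [_ [Esum _]]]]] := He; set f := sigma (e i) => Hi.
have adj_neq0 j : sigma (e j) != 0.
  apply: contra_neq (Ene j) => E.
  by rewrite -(adjK (De j)) E (adjoint0 Hact Hrho Hh Hsigma).
have /existsP [j nj] : [exists j, (f \o e j)%VF != 0].
  apply: contraR (adj_neq0 i); rewrite negb_exists => /forallP H.
  rewrite -/f -[f]comp_lfun1r -Esum comp_lfun_sumr big1 // => j _.
  by move: (H j); rewrite negbK => /eqP.
have ej_f : (e j \o f)%VF = e j.
  case: (field_decomposition_idem He j (Ke_adj i) (adjoint_idempotent i)) => // H.
  by move: nj; rewrite (in_kpoly_comm (Ke_adj i) (proj1 He j)) H eqxx.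
have ei_adj : (e i \o sigma (e j))%VF = sigma (e j).
  have := congr1 sigma ej_f.
  by rewrite /f adj_comp // adjK.
have adj_ej : sigma (e j) = e i.
  case: (field_decomposition_idem He i (Ke_adj j) (adjoint_idempotent j)) => H.
    by move: (adj_neq0 j); rewrite -ei_adj H eqxx.
  by rewrite -ei_adj H.
exists j; first by apply: contra_neq Hi => ij; rewrite /f ij adj_ej ij.
by rewrite /f -adj_ej (adjK).
Qed.

End AdjointIdempotents.

Section IdempotentsInLatticeOrder.

Unset Implicit Arguments.

Context {R : realType} {k : fieldType} {nu : k -> R}.
Context {D : falgType k} {nuD : D -> R} {rho : D -> D}.
Context {V : vectType k} {actV : V -> D -> V} {eps : D} {h : V -> V -> D}.
Context {sigma : 'End(V) -> 'End(V)} {beta : 'End(V)}.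
Context {J : finType} {e : J -> 'End(V)} {Jp : {set J}}.
Context {Dl : J -> falgType k} {nuDl : forall i, Dl i -> R} {io : forall i, 'End(V) -> Dl i}.
Context {W : J -> vectType k} {actW : forall i, W i -> Dl i -> W i}.
Context {phi : forall i, 'End(W i) -> 'End(V)} {x : forall i, R -> W i -> Prop}.
Context {Lambda : R -> V -> Prop}.

Hypotheses (Hdisc : discrete_normalized nu) (Hk2 : residue_char_not_2 nu).
Hypotheses (HD : central_division D) (HnuD : valuation_extending nu nuD).
Hypotheses (Hrho : is_involution rho) (Hact : right_module actV).
Hypotheses (Hh : nondeg_eps_hermitian actV rho eps h) (Hsigma : adjoint_inv actV h sigma).
Hypotheses (Hbeta : in_g actV sigma beta) (He : field_decomposition beta e).
Hypothesis HJp : Jplus_choice sigma e Jp.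
Hypotheses (HDl : forall i, central_division_over beta (e i) (io i)).
Hypotheses (HnuDl : forall i, valuation_extending nu (nuDl i)).
Hypotheses (HW : forall i, right_module (actW i)).
Hypotheses (Hphi : forall i, Ei_algebra_iso actV beta (e i) (io i) (actW i) (phi i)).
Hypothesis Hx : forall i, in_Jun sigma e i \/ i \in Jp ->
  lattice_function (nuDl i) (actW i) (x i).
Hypothesis HL : lattice_function nuD actV Lambda.
Hypothesis HLF : forall t a, LF actV sigma e Jp actW phi x t a -> End_lf actV Lambda t a.

Let Dbeta : D_linear actV beta := proj1 Hbeta.
Let Sbeta : sigma beta = - beta.
Proof. by apply/eqP; rewrite -addr_eq0 addrC; apply/eqP; exact: (proj2 Hbeta). Qed.
Let De i : D_linear actV (e i) := in_kpoly_D_linear Hact Dbeta (proj1 He i).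
Let adj_comp := adjoint_comp Hrho Hh Hsigma.
Let adjK := adjointK Hrho Hh Hsigma.
Let Sidem := adjoint_idempotent Hact Hrho Hh Hsigma Dbeta He.
Let adj_orth := adjoint_idempotent_orth Hact Hrho Hh Hsigma HD Dbeta Sbeta He.
Let partner := adjoint_idempotent_partner Hact Hrho Hh Hsigma HD Dbeta Sbeta He.

Lemma iso_phi0 i : phi i 0 = 0.
Proof.
have [_ [_ [_ [phiD _]]]] := Hphi i; have D0 := D_linear0 (HW i).
by apply: (addIr (phi i 0)); rewrite -phiD // !add0r.
Qed.

Lemma LF_component i t y :
  (in_Jun sigma e i ->
     (exists2 f, End_lf (actW i) (x i) t f & y = phi i f) /\ in_g actV sigma y) ->
  (i \in Jp -> exists2 f, End_lf (actW i) (x i) t f & y = phi i f - sigma (phi i f)) ->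
  (~ in_Jun sigma e i -> i \notin Jp -> y = 0) ->
  LF actV sigma e Jp actW phi x t y.
Proof.
move=> Hun Hplus Hnone; exists (fun j => if j == i then y else 0); split.
  by rewrite (bigD1 i) //= eqxx big1 ?addr0 // => j /negbTE ->.
move=> j; have [->|_] := eqVneq j i; first by split=> //; split.
have sig0 := adjoint0 Hact Hrho Hh Hsigma.
split; [move=> Hj; split | split => // Hj].
- by exists 0; rewrite ?iso_phi0 //; apply: (End_lf0 (HW j) (Hx j (or_introl Hj))).
- by split; [exact: D_linear0 | rewrite sig0 addr0].
- by exists 0; rewrite ?iso_phi0 ?sig0 ?subr0 //; apply: (End_lf0 (HW j) (Hx j (or_intror Hj))).
Qed.

Lemma in_Ei_kpoly {i a} : in_Ei beta (e i) a -> in_kpoly beta a.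
Proof. by case=> b Kb ->; apply: in_kpoly_comp (proj1 He i) Kb. Qed.

Lemma unitary_notin_Jplus {i} : in_Jun sigma e i -> i \notin Jp.
Proof. by move=> Hi; apply/negP => /(proj1 HJp i); rewrite Hi eqxx. Qed.

(* Multiplication by [a] is central in [End_{Delta_i}(W_i)], so it lies in
   [LF(x)] at level [nu(a)]. *)
Lemma skew_central_End_lf {i a} :
  in_Jun sigma e i -> in_Ei beta (e i) a -> sigma a = - a -> io i a != 0 ->
  End_lf actV Lambda (nuDl i (io i a)) a.
Proof.
move=> Hi Ea Sa na; have [Hdiv [_ [_ [_ [_ [_ ioC]]]]]] := HDl i.
have ca : forall d, io i a * d = d * io i a by apply/ioC; exists a.
have [f fE Lf] := central_act_End_lf Hdisc (HnuDl i) Hdiv (HW i) (Hx i (or_introl Hi)) na ca.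
have phi_f : phi i f = a.
  by have [_ [_ [_ [_ [_ [_ phi_act]]]]]] := Hphi i; apply: phi_act Ea (proj1 Lf) fE.
apply: HLF; apply: (LF_component i) => [_|Hp|/(_ Hi) []].
- split; first by exists f.
  by split; [exact: (in_kpoly_D_linear Hact Dbeta (in_Ei_kpoly Ea)) | rewrite Sa subrr].
- by move: (unitary_notin_Jplus Hi); rewrite Hp.
Qed.

Lemma unitary_idempotent_End_lf0 i :
  in_Jun sigma e i -> (e i \o beta)%VF != 0 -> End_lf actV Lambda 0 (e i).
Proof.
move=> Hi nz; have [Ke [_ [Eid [_ [_ Einv]]]]] := He.
set z := (e i \o beta)%VF in nz *.
have Kz : in_kpoly beta z := in_kpoly_comp (Ke i) (in_kpoly_beta beta).
have ei_z : (e i \o z)%VF = z by rewrite /z comp_lfunA Eid.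
have [b Kb] := Einv i z Kz (eq_ind_r (fun u => u != 0) nz ei_z); rewrite ei_z => zb.
set w := (e i \o b)%VF.
have z_ei : (z \o e i)%VF = z by rewrite /z -comp_lfunA -(in_kpoly_comm_beta (Ke i)) comp_lfunA Eid.
have zw : (z \o w)%VF = e i by rewrite /w comp_lfunA z_ei zb.
have Dw : D_linear actV w by exact: (in_kpoly_D_linear Hact Dbeta (in_kpoly_comp (Ke i) Kb)).
have Dz : D_linear actV z by exact: (in_kpoly_D_linear Hact Dbeta Kz).
have Sz : sigma z = - z.
  by rewrite /z adj_comp // Sbeta Hi comp_lfunNl (in_kpoly_comm_beta (Ke i)).
have Sw : sigma w = - w.
  have ei_w : (e i \o w)%VF = w by rewrite /w comp_lfunA Eid.
  have Sw_ei : (sigma w \o e i)%VF = sigma w by rewrite -{2}ei_w adj_comp // Hi.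
  have Sw_z : (sigma w \o z)%VF = - e i.
    by apply: oppr_inj; rewrite -comp_lfunNr -Sz -adj_comp // zw Hi opprK.
  by rewrite -Sw_ei -zw comp_lfunA Sw_z comp_lfunNl ei_w.
have [_ [ioM [_ [io1 _]]]] := proj2 (HDl i).
have Ez : in_Ei beta (e i) z by exists beta => //; exact: in_kpoly_beta.
have Ew : in_Ei beta (e i) w by exists b.
have io_zw : io i z * io i w = 1 by rewrite -ioM // zw io1.
have [nz' nw'] : io i z != 0 /\ io i w != 0.
  by split; apply: contra_eq_neq io_zw => ->; rewrite ?mul0r ?mulr0 eq_sym oner_neq0.
have := End_lf_comp (skew_central_End_lf Hi Ez Sz nz') (skew_central_End_lf Hi Ew Sw nw').
suff -> : nuDl i (io i z) + nuDl i (io i w) = 0 by rewrite zw.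
have HvDl := proj1 (HnuDl i).
by rewrite -(proj1 HvDl) ?io_zw ?(valuation1 HvDl) ?oner_neq0.
Qed.

Lemma plus_idempotent_End_lf0 {p} :
  p \in Jp -> End_lf actV Lambda 0 (e p) /\ End_lf actV Lambda 0 (sigma (e p)).
Proof.
move=> Hp; have [Ke [_ [Eid _]]] := He.
have Lu : End_lf actV Lambda 0 (e p - sigma (e p)).
  apply: HLF; apply: (LF_component p) => [Hun|_|]; last by rewrite Hp.
    by move: (proj1 HJp p Hp); rewrite Hun eqxx.
  exists \1%VF; first exact: End_lf_id.
  by have [_ [_ [_ [_ [_ [-> _]]]]]] := Hphi p.
set a := e p in Lu *; set b := sigma (e p) in Lu *; set u := a - b in Lu *.
have ab : (a \o b)%VF = 0 by apply/adj_orth/(proj1 HJp).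
have ba : (b \o a)%VF = 0.
  by rewrite /b (in_kpoly_comm (adjoint_in_kpoly Hact Dbeta Hrho Hh Hsigma HD Sbeta (Ke p)) (Ke p)).
have uu : (u \o u)%VF = a + b.
  rewrite /u comp_lfunDl !comp_lfunDr !comp_lfunNl !comp_lfunNr.
  by rewrite /a Eid -/a ab ba Sidem oppr0 opprK !addr0 add0r.
have Luu : End_lf actV Lambda 0 (u \o u)%VF by rewrite -(addr0 0); exact: End_lf_comp.
have [two_neq0 nu2] := Hk2; have HvD := proj1 HnuD.
have half : in_o nuD (2%:R^-1 : k)%:A.
  have alg_neq0 (c : k) : c != 0 -> c%:A != 0 :> D.
    by move=> nc; rewrite scaler_eq0 negb_or nc oner_neq0.
  have := proj1 HvD (2%:R^-1 : k)%:A 2%:R%:A.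
  rewrite -scalerAl mul1r scalerA mulVf // scale1r (valuation1 HvD) (proj2 HnuD _ two_neq0).
  rewrite nu2 addr0 => H; right.
  by rewrite -H ?oner_neq0 ?alg_neq0 ?invr_eq0.
have halve (c : 'End(V)) : (2%:R^-1 : k) *: (c + c) = c.
  by rewrite -mulr2n -scaler_nat scalerA mulVf ?scale1r.
split.
- have -> : a = (2%:R^-1 : k) *: (u + (u \o u)%VF) by rewrite uu /u addrACA addNr addr0 halve.
  exact: (End_lfZ Hact HvD HL half (End_lfD Hact HvD HL Lu Luu)).
- have -> : b = (2%:R^-1 : k) *: ((u \o u)%VF - u).
    by rewrite uu /u opprB [a + b]addrC addrACA addrN addr0 halve.
  exact: (End_lfZ Hact HvD HL half (End_lfB Hact HvD HL Luu Lu)).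
Qed.

Lemma nonunitary_idempotent_End_lf0 i :
  ~ in_Jun sigma e i -> End_lf actV Lambda 0 (e i).
Proof.
move=> /eqP Hi; have [Hip|Hip] := boolP (i \in Jp).
  exact: (plus_idempotent_End_lf0 Hip).1.
have [j ij Ej] := partner _ Hi.
have Hjp : j \in Jp by have := proj2 HJp i j ij Ej; rewrite (negbTE Hip); case: (j \in Jp).
by have := (plus_idempotent_End_lf0 Hjp).2; rewrite -Ej adjK.
Qed.

Lemma nondegenerate_idempotent_End_lf0 i :
  (e i \o beta)%VF != 0 -> End_lf actV Lambda 0 (e i).
Proof.
move=> nz; have [Hi|Hi] := classic (in_Jun sigma e i).
  exact: unitary_idempotent_End_lf0.
exact: nonunitary_idempotent_End_lf0.
Qed.

Lemma idempotent_End_lf0 i : End_lf actV Lambda 0 (e i).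
Proof.
have [Hi|] := eqVneq (e i \o beta)%VF 0; last exact: nondegenerate_idempotent_End_lf0.
have others j : j != i -> End_lf actV Lambda 0 (e j).
  move=> ji; apply: nondegenerate_idempotent_End_lf0; apply: contra_neq ji => Hj.
  exact: (annihilated_idempotent_unique He Hj Hi).
have -> : e i = \1%VF - \sum_(j | j != i) e j.
  by rewrite -(proj1 (proj2 (proj2 (proj2 (proj2 He))))) (bigD1 i) //= addrK.
have HvD := proj1 HnuD.
exact: (End_lfB Hact HvD HL (End_lf_id _ _) (End_lf_sum Hact HvD HL others)).
Qed.

End IdempotentsInLatticeOrder.

Unset Implicit Arguments.

Theorem mainTheorem5
  (R : realType)
  (k : fieldType) (nu : k -> R)
  (Hk : nonarch_local_field nu) (Hk2 : residue_char_not_2 nu)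
  (D : falgType k) (nuD : D -> R) (rho : D -> D)
  (HD : central_division D) (HnuD : valuation_extending nu nuD)
  (Hrho : continuous_involution nuD rho)
  (V : vectType k) (actV : V -> D -> V) (HV : right_module actV)
  (eps : D) (h : V -> V -> D) (Hh : nondeg_eps_hermitian actV rho eps h)
  (sigma : 'End(V) -> 'End(V)) (Hsigma : adjoint_inv actV h sigma)
  (beta : 'End(V)) (Hbeta : in_g actV sigma beta) (Hsep : separable_elt beta)
  (J : finType) (e : J -> 'End(V)) (He : field_decomposition beta e)
  (Jp : {set J}) (HJp : Jplus_choice sigma e Jp)
  (Dl : J -> falgType k) (nuDl : forall i, Dl i -> R)
  (io : forall i, 'End(V) -> Dl i)
  (W : J -> vectType k) (actW : forall i, W i -> Dl i -> W i)
  (phi : forall i, 'End(W i) -> 'End(V))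
  (rhoW : forall i, Dl i -> Dl i) (epsW : forall i, Dl i)
  (hW : forall i, W i -> W i -> Dl i)
  (HDl : forall i, central_division_over beta (e i) (io i))
  (HnuDl : forall i, valuation_extending nu (nuDl i))
  (HW : forall i, right_module (actW i))
  (Hphi : forall i, Ei_algebra_iso actV beta (e i) (io i) (actW i) (phi i))
  (HrhoW : forall i, in_Jun sigma e i -> is_involution (rhoW i))
  (HhW : forall i, in_Jun sigma e i ->
           nondeg_eps_hermitian (actW i) (rhoW i) (epsW i) (hW i))
  (HadW : forall i, in_Jun sigma e i ->
           adjoint_is_transported sigma (actW i) (hW i) (phi i))
  (Hnexc : ~ excluded_case rho eps h)
  (x : forall i, R -> W i -> Prop)
  (Hx : in_BH sigma e Jp nuDl actW hW x)
  (Lambda : R -> V -> Prop) (HL : self_dual_lf nuD actV h Lambda)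
  (HEq : forall (t : R) (a : 'End(V)),
      (End_lf actV Lambda t a /\ in_frak_h actV sigma beta a) <->
      LF actV sigma e Jp actW phi x t a) :
  forall i : J, End_lf actV Lambda 0 (e i).
Proof.
have Hx' i : in_Jun sigma e i \/ i \in Jp -> lattice_function (nuDl i) (actW i) (x i).
  by case=> [/(proj1 (Hx i))[] | /(proj2 (Hx i))].
have HLF t a : LF actV sigma e Jp actW phi x t a -> End_lf actV Lambda t a.
  by move=> /(HEq t a)[].
exact: (idempotent_End_lf0 (proj1 (proj2 Hk)) Hk2 HD HnuD (proj1 Hrho) HV Hh Hsigma
  Hbeta He HJp HDl HnuDl HW Hphi Hx' (proj1 HL) HLF).
Qed.
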